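(* Let $\lambda\ge0$. If a solution $(\xi,L_1,L_2,L_3,R_1,R_2,R_3)$ of the system $(S_\lambda)$ is defined on $[T,S)$ with $S<\infty$ and cannot be extended past $S$, then $\lim_{r\to S}\xi(r)=-\infty$.
   Context: The system $(S_\lambda)$ is: $\xi'=-L_1^2-L_2^2-L_3^2-\lambda$, $L_i'=-\xi L_i+\frac{R_i^2}{2}-\frac{(R_j-R_k)^2}{2}-\lambda$, $R_i'=R_i(L_i-L_j-L_k)$ for $i=1,2,3$, $\{i,j,k\}=\{1,2,3\}$, where $'$ denotes $d/dr$. *)

From Stdlib Require Import Reals.
From Coquelicot Require Import Coquelicot.
Open Scope R_scope.

Definition rhs_xi (lam l1 l2 l3 : R) : R := - l1 ^ 2 - l2 ^ 2 - l3 ^ 2 - lam.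
Definition rhs_L (lam x li ri rj rk : R) : R :=
  - x * li + ri ^ 2 / 2 - (rj - rk) ^ 2 / 2 - lam.
Definition rhs_R (ri li lj lk : R) : R := ri * (li - lj - lk).

Definition is_solution_on (lam T S : R)
    (xi L1 L2 L3 R1 R2 R3 : R -> R) : Prop :=
  (forall r, T < r < S ->
     derivable_pt_lim xi r (rhs_xi lam (L1 r) (L2 r) (L3 r)) /\
     derivable_pt_lim L1 r (rhs_L lam (xi r) (L1 r) (R1 r) (R2 r) (R3 r)) /\
     derivable_pt_lim L2 r (rhs_L lam (xi r) (L2 r) (R2 r) (R3 r) (R1 r)) /\
     derivable_pt_lim L3 r (rhs_L lam (xi r) (L3 r) (R3 r) (R1 r) (R2 r)) /\
     derivable_pt_lim R1 r (rhs_R (R1 r) (L1 r) (L2 r) (L3 r)) /\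
     derivable_pt_lim R2 r (rhs_R (R2 r) (L2 r) (L3 r) (L1 r)) /\
     derivable_pt_lim R3 r (rhs_R (R3 r) (L3 r) (L1 r) (L2 r))) /\
  filterlim xi (at_right T) (locally (xi T)) /\
  filterlim L1 (at_right T) (locally (L1 T)) /\
  filterlim L2 (at_right T) (locally (L2 T)) /\
  filterlim L3 (at_right T) (locally (L3 T)) /\
  filterlim R1 (at_right T) (locally (R1 T)) /\
  filterlim R2 (at_right T) (locally (R2 T)) /\
  filterlim R3 (at_right T) (locally (R3 T)).

Definition not_extendable (lam T S : R)
    (xi L1 L2 L3 R1 R2 R3 : R -> R) : Prop :=
  ~ exists (S' : R) (xi' L1' L2' L3' R1' R2' R3' : R -> R),
      S < S' /\
      is_solution_on lam T S' xi' L1' L2' L3' R1' R2' R3' /\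
      (forall r, T <= r < S ->
         xi' r = xi r /\ L1' r = L1 r /\ L2' r = L2 r /\ L3' r = L3 r /\
         R1' r = R1 r /\ R2' r = R2 r /\ R3' r = R3 r).

From Stdlib Require Import Reals Lra Lia Classical.
From Coquelicot Require Import Coquelicot.
Open Scope R_scope.

(* Since xi' = - L_1^2 - L_2^2 - L_3^2 - lam <= 0, either xi tends to -oo at S or xi is
   bounded on [T, S). In the second case the weighted energies R_i^2 exp (xi r - 3 r) and
   (L_i^2 + Q) exp (- (2 X + 1) r) are nonincreasing (X bounds |xi|, and Q the square of
   the R-terms of L_i'), so every component stays in a box near S. There the vector field agrees with its clamping to a slightly larger box, which
   is bounded and globally Lipschitz; Picard iteration for the clamped field then gives a
   solution on [t1, t1 + h) with h depending only on the box, hence reaching past S from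
   any t1 close enough to S; by uniqueness it agrees with the given solution on [t1, S),
   so gluing the two extends that solution past S. *)

Lemma Rabs_sub_triang a b c : Rabs (a - c) <= Rabs (a - b) + Rabs (b - c).
Proof. replace (a - c) with ((a - b) + (b - c)) by ring. apply Rabs_triang. Qed.

Lemma Rle_0_of_le_geometric a C :
  0 <= C -> (forall k, a <= C * (1 / 2) ^ k) -> a <= 0.
Proof.
  intros HC H. apply Rnot_lt_le. intros Ha.
  assert (Hy : 0 < a / (C + 1)) by (apply Rdiv_lt_0_compat; lra).
  destruct (pow_lt_1_zero (1 / 2) ltac:(rewrite Rabs_pos_eq; lra) _ Hy) as [N HN].
  specialize (HN N (le_n N)). specialize (H N).
  rewrite Rabs_pos_eq in HN by (apply pow_le; lra).
  assert (C * (1 / 2) ^ N <= C * (a / (C + 1))) by (apply Rmult_le_compat_l; lra).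
  assert (C * (a / (C + 1)) < a) by (apply Rmult_lt_reg_r with (C + 1); field_simplify; lra).
  lra.
Qed.

Lemma mult_sub_between a b a' b' Ma Mb d e :
  Rabs b <= Mb -> Rabs a' <= Ma -> Rabs (a - a') <= d -> Rabs (b - b') <= e ->
  - (Mb * d + Ma * e) <= a * b - a' * b' <= Mb * d + Ma * e.
Proof.
  intros Hb Ha' Hd He. apply Rabs_le_between.
  replace (a * b - a' * b') with ((a - a') * b + a' * (b - b')) by ring.
  eapply Rle_trans; [apply Rabs_triang|]. rewrite !Rabs_mult.
  pose proof (Rabs_pos (a - a')). pose proof (Rabs_pos (b - b')).
  pose proof (Rabs_pos b). pose proof (Rabs_pos a'). nra.
Qed.

Lemma sq_sub_between a a' M d :
  Rabs a <= M -> Rabs a' <= M -> Rabs (a - a') <= d ->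
  - (2 * M * d) <= a ^ 2 - a' ^ 2 <= 2 * M * d.
Proof.
  intros Ha Ha' Hd. pose proof (mult_sub_between a a a' a' M M d d Ha Ha' Hd Hd). nra.
Qed.

Lemma Rabs_le_of_sq_le x P : x ^ 2 <= P -> Rabs x <= 1 + P.
Proof.
  intros H. rewrite <- (pow2_abs x) in H. pose proof (pow2_ge_0 (Rabs x - 1)). nra.
Qed.

Lemma exp_le_exp x y : x <= y -> exp x <= exp y.
Proof.
  intros H. destruct (Rle_lt_or_eq_dec _ _ H) as [Hlt | <-].
  - left. apply exp_increasing, Hlt.
  - apply Rle_refl.
Qed.

Lemma derivable_pt_lim_linear c r : derivable_pt_lim (fun t => c * t) r c.
Proof.
  pose proof (derivable_pt_lim_scal id c r 1 (derivable_pt_lim_id r)) as H.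
  rewrite Rmult_1_r in H. exact H.
Qed.

Lemma lipschitz_continuous (g : R -> R) C :
  (forall a b, Rabs (g a - g b) <= C * Rabs (a - b)) -> forall x, continuous g x.
Proof.
  intros H x. apply filterlim_locally. intros eps.
  assert (HC : 0 <= C).
  { specialize (H 1 0). pose proof (Rabs_pos (g 1 - g 0)).
    rewrite Rminus_0_r, Rabs_R1 in H. lra. }
  assert (Hd : 0 < eps / (C + 1)) by (apply Rdiv_lt_0_compat; [apply cond_pos | lra]).
  exists (mkposreal _ Hd). intros y Hy. change (Rabs (y - x) < eps / (C + 1)) in Hy.
  change (Rabs (g y - g x) < eps).
  eapply Rle_lt_trans; [apply H|].
  apply Rle_lt_trans with ((C + 1) * Rabs (y - x)); [pose proof (Rabs_pos (y - x)); nra|].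
  apply Rmult_lt_reg_r with (/ (C + 1)); [apply Rinv_0_lt_compat; lra|].
  replace ((C + 1) * Rabs (y - x) * / (C + 1)) with (Rabs (y - x)) by (field; lra).
  exact Hy.
Qed.

Lemma derivable_pt_lim_eq_on (f g : R -> R) a b r l :
  (forall s, a < s < b -> f s = g s) -> a < r < b ->
  derivable_pt_lim f r l -> derivable_pt_lim g r l.
Proof.
  intros Hfg Hr Hf. apply is_derive_Reals. apply is_derive_Reals in Hf.
  apply (is_derive_ext_loc f); [|exact Hf].
  assert (He : 0 < Rmin (r - a) (b - r)) by (apply Rmin_pos; lra).
  exists (mkposreal _ He). intros s Hs. change (Rabs (s - r) < Rmin (r - a) (b - r)) in Hs.
  pose proof (Rmin_l (r - a) (b - r)). pose proof (Rmin_r (r - a) (b - r)).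
  apply Rabs_def2 in Hs. apply Hfg. lra.
Qed.

Lemma nonincreasing_of_derive_nonpos (f df : R -> R) a b :
  (forall r, a < r < b -> derivable_pt_lim f r (df r) /\ df r <= 0) ->
  forall x y, a < x -> x <= y -> y < b -> f y <= f x.
Proof.
  intros H x y Hx Hxy Hy.
  destruct (MVT_gen f x y df) as [c [Hc Heq]];
    rewrite ?Rmin_left, ?Rmax_right in * by lra.
  - intros z Hz. apply is_derive_Reals, H. lra.
  - intros z Hz. apply derivable_continuous_pt. exists (df z). apply H. lra.
  - assert (df c <= 0) by (apply H; lra). nra.
Qed.

Lemma filterlim_at_right_eq (f g : R -> R) T S :
  T < S -> (forall s, T <= s < S -> f s = g s) ->
  filterlim f (at_right T) (locally (f T)) -> filterlim g (at_right T) (locally (g T)).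
Proof.
  intros HTS Hfg Hf. rewrite <- (Hfg T) by lra.
  apply (filterlim_ext_loc f); [|exact Hf].
  assert (He : 0 < S - T) by lra.
  exists (mkposreal _ He). intros s Hs Hs'. change (Rabs (s - T) < S - T) in Hs.
  apply Rabs_def2 in Hs. apply Hfg. lra.
Qed.

Lemma RInt_lipschitz (g : R -> R) a B x y :
  (forall s, continuous g s) -> (forall s, Rabs (g s) <= B) ->
  Rabs (RInt g a y - RInt g a x) <= B * Rabs (y - x).
Proof.
  intros Hc Hb. apply (bounded_variation (fun t => RInt g a t) g). intros t _.
  split; [|apply Hb].
  apply (is_derive_RInt g _ a); [|apply Hc].
  apply filter_forall. intros u.
  exact (RInt_correct g a u (ex_RInt_continuous g a u (fun z _ => Hc z))).
Qed.

Lemma geometric_cauchy_Lim_seq (u : nat -> R) c :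
  0 <= c -> (forall m k, Rabs (u (m + k)%nat - u m) <= c * (1 / 2) ^ m) ->
  forall m, Rabs (Lim_seq u - u m) <= c * (1 / 2) ^ m.
Proof.
  intros Hc Hu m.
  assert (Hcv : ex_finite_lim_seq u).
  { apply ex_lim_seq_cauchy_corr. intros eps.
    assert (Hy : 0 < eps / (2 * c + 1)) by (apply Rdiv_lt_0_compat; [apply cond_pos | lra]).
    destruct (pow_lt_1_zero (1 / 2) ltac:(rewrite Rabs_pos_eq; lra) _ Hy) as [N HN].
    specialize (HN N (le_n N)). rewrite Rabs_pos_eq in HN by (apply pow_le; lra).
    exists N. intros p q Hp Hq.
    pose proof (Hu N (p - N)%nat) as Hup. pose proof (Hu N (q - N)%nat) as Huq.
    replace (N + (p - N))%nat with p in Hup by lia.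
    replace (N + (q - N))%nat with q in Huq by lia.
    eapply Rle_lt_trans; [apply (Rabs_sub_triang _ (u N))|].
    rewrite (Rabs_minus_sym (u N)).
    assert (2 * c * (1 / 2) ^ N <= 2 * c * (eps / (2 * c + 1))) by (apply Rmult_le_compat_l; lra).
    assert (2 * c * (eps / (2 * c + 1)) < eps).
    { pose proof (cond_pos eps). apply Rmult_lt_reg_r with (2 * c + 1); [lra|].
      field_simplify; lra. }
    lra. }
  assert (Hlim : is_lim_seq (fun k => Rabs (u (m + k)%nat - u m)) (Rabs (Lim_seq u - u m))).
  { apply (is_lim_seq_abs _ (Finite (Lim_seq u - u m))).
    apply is_lim_seq_minus'; [|apply is_lim_seq_const].
    apply (is_lim_seq_ext (fun k => u (k + m)%nat)); [intros k; f_equal; lia|].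
    apply is_lim_seq_incr_n, Lim_seq_correct', Hcv. }
  exact (is_lim_seq_le _ _ _ _ (Hu m) Hlim (is_lim_seq_const _)).
Qed.

Definition clamp (a b x : R) : R := Rmax a (Rmin b x).

Lemma clamp_range a b x : a <= b -> a <= clamp a b x <= b.
Proof. intros. unfold clamp, Rmax, Rmin. repeat destruct Rle_dec; lra. Qed.

Lemma clamp_id a b x : a <= x <= b -> clamp a b x = x.
Proof. intros. unfold clamp, Rmax, Rmin. repeat destruct Rle_dec; lra. Qed.

Lemma clamp_lipschitz a b x y : a <= b -> Rabs (clamp a b x - clamp a b y) <= Rabs (x - y).
Proof.
  intros. unfold clamp, Rmax, Rmin.
  repeat destruct Rle_dec; unfold Rabs; repeat destruct Rcase_abs; lra.
Qed.

(** * Solutions of autonomous systems *)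

(* A point of R^n is a function nat -> R of which only the coordinates i < n matter. *)
Definition in_box (n : nat) (M : R) (x : nat -> R) : Prop :=
  forall i, (i < n)%nat -> Rabs (x i) <= M.

Definition solves (n : nat) (G : (nat -> R) -> nat -> R) (a b : R) (y : R -> nat -> R) : Prop :=
  forall r, a < r < b -> forall i, (i < n)%nat ->
    derivable_pt_lim (fun s => y s i) r (G (y r) i).

Lemma in_box_le n M M' x : M <= M' -> in_box n M x -> in_box n M' x.
Proof. intros HM Hx i Hi. specialize (Hx i Hi). lra. Qed.

Lemma solves_restrict n G a b a' b' y :
  a <= a' -> b' <= b -> solves n G a b y -> solves n G a' b' y.
Proof. intros Ha Hb Hy r Hr. apply Hy. lra. Qed.

Section Picard.

Variable n : nat.
Variable G : (nat -> R) -> nat -> R.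
Variables B K : R.
Hypothesis B_ge0 : 0 <= B.
Hypothesis G_bounded : forall x i, (i < n)%nat -> Rabs (G x i) <= B.
Hypothesis G_lipschitz : forall x y d i,
  (forall j, (j < n)%nat -> Rabs (x j - y j) <= d) -> (i < n)%nat ->
  Rabs (G x i - G y i) <= K * d.

Variables (u0 : nat -> R) (t0 h : R).
Hypothesis h_ge0 : 0 <= h.
Hypothesis h_contracting : h * K <= 1 / 2.

(* Clamping the time makes every iterate defined on all of R, constant outside
   [t0, t0 + h]. *)
Fixpoint picard (k : nat) (t : R) : nat -> R :=
  match k with
  | O => u0
  | S k => fun i => u0 i + RInt (fun s => G (picard k s) i) t0 (clamp t0 (t0 + h) t)
  end.

Definition picard_limit (t : R) (i : nat) : R := Lim_seq (fun k => picard k t i).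

Lemma field_along_continuous (y : R -> nat -> R) C i :
  (forall j, (j < n)%nat -> forall a b, Rabs (y a j - y b j) <= C * Rabs (a - b)) ->
  (i < n)%nat -> forall s, continuous (fun s => G (y s) i) s.
Proof.
  intros Hy Hi. apply lipschitz_continuous with (K * C). intros a b.
  rewrite Rmult_assoc. apply G_lipschitz; auto.
Qed.

Lemma RInt_clamp_bound (g : R -> R) C t :
  (forall s, continuous g s) -> (forall s, Rabs (g s) <= C) ->
  Rabs (RInt g t0 (clamp t0 (t0 + h) t)) <= h * C.
Proof.
  intros Hc Hb. destruct (clamp_range t0 (t0 + h) t) as [H1 H2]; [lra|].
  pose proof (Rle_trans _ _ _ (Rabs_pos _) (Hb 0)).
  eapply Rle_trans.
  - apply abs_RInt_le_const; auto.
    apply (ex_RInt_continuous (V := R_CompleteNormedModule)). intros; apply Hc.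
  - apply Rmult_le_compat_r; lra.
Qed.

Lemma RInt_minus_R (f g : R -> R) a b :
  (forall s, continuous f s) -> (forall s, continuous g s) ->
  RInt f a b - RInt g a b = RInt (fun s => f s - g s) a b.
Proof.
  intros Hf Hg. symmetry.
  apply (RInt_minus f g); apply (ex_RInt_continuous (V := R_CompleteNormedModule)); auto.
Qed.

Lemma picard_lipschitz k i t s :
  (i < n)%nat -> Rabs (picard k t i - picard k s i) <= B * Rabs (t - s).
Proof.
  revert i t s. induction k as [|k IH]; intros i t s Hi; simpl.
  - rewrite Rminus_diag, Rabs_R0. pose proof (Rabs_pos (t - s)). nra.
  - rewrite Rminus_plus_l_l. eapply Rle_trans.
    + apply RInt_lipschitz; [|intros; apply G_bounded, Hi].
      apply field_along_continuous with B; auto.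
    + apply Rmult_le_compat_l; [lra | apply clamp_lipschitz; lra].
Qed.

Lemma picard_continuous k i :
  (i < n)%nat -> forall s, continuous (fun s => G (picard k s) i) s.
Proof.
  intros Hi. apply field_along_continuous with B; auto.
  intros; apply picard_lipschitz; auto.
Qed.

Lemma picard_step k t i :
  (i < n)%nat -> Rabs (picard (S k) t i - picard k t i) <= B * h * (1 / 2) ^ k.
Proof.
  revert t i. induction k as [|k IH]; intros t i Hi.
  - simpl. rewrite Rplus_minus_l, Rmult_1_r, Rmult_comm.
    apply RInt_clamp_bound; [intros; apply continuous_const | intros; apply G_bounded, Hi].
  - change (Rabs (u0 i + RInt (fun s => G (picard (S k) s) i) t0 (clamp t0 (t0 + h) t)
      - (u0 i + RInt (fun s => G (picard k s) i) t0 (clamp t0 (t0 + h) t)))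
      <= B * h * (1 / 2) ^ S k).
    rewrite Rminus_plus_l_l, RInt_minus_R by (apply picard_continuous; auto).
    eapply Rle_trans.
    + apply RInt_clamp_bound with (C := K * (B * h * (1 / 2) ^ k)).
      * intros s. apply (continuous_minus (fun s => G (picard (S k) s) i));
          apply picard_continuous; auto.
      * intros s. apply G_lipschitz; auto.
    + assert (0 <= B * h * (1 / 2) ^ k) by (apply Rmult_le_pos; [nra | apply pow_le; lra]).
      simpl. nra.
Qed.

Lemma picard_cauchy m k t i :
  (i < n)%nat -> Rabs (picard (m + k) t i - picard m t i) <= 2 * B * h * (1 / 2) ^ m.
Proof.
  intros Hi.
  enough (Htel : Rabs (picard (m + k) t i - picard m t i)
                 <= 2 * B * h * (1 / 2) ^ m - 2 * B * h * (1 / 2) ^ (m + k)).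
  { assert (0 <= B * h * (1 / 2) ^ (m + k)) by (apply Rmult_le_pos; [nra | apply pow_le; lra]).
    lra. }
  induction k as [|k IH].
  - rewrite Nat.add_0_r, Rminus_diag, Rabs_R0. lra.
  - rewrite Nat.add_succ_r. eapply Rle_trans; [apply (Rabs_sub_triang _ (picard (m + k) t i))|].
    pose proof (picard_step (m + k) t i Hi). rewrite <- tech_pow_Rmult. lra.
Qed.

Lemma picard_limit_close k t i :
  (i < n)%nat -> Rabs (picard_limit t i - picard k t i) <= 2 * B * h * (1 / 2) ^ k.
Proof.
  intros Hi. apply (geometric_cauchy_Lim_seq (fun k => picard k t i)); [nra|].
  intros; apply picard_cauchy, Hi.
Qed.

Lemma picard_limit_lipschitz i t s :
  (i < n)%nat -> Rabs (picard_limit t i - picard_limit s i) <= B * Rabs (t - s).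
Proof.
  intros Hi.
  enough (Rabs (picard_limit t i - picard_limit s i) - B * Rabs (t - s) <= 0) by lra.
  apply Rle_0_of_le_geometric with (C := 4 * B * h); [nra|]. intros k.
  pose proof (Rabs_sub_triang (picard_limit t i) (picard k t i) (picard_limit s i)).
  pose proof (Rabs_sub_triang (picard k t i) (picard k s i) (picard_limit s i)).
  pose proof (picard_limit_close k t i Hi).
  pose proof (picard_limit_close k s i Hi) as Hs. rewrite Rabs_minus_sym in Hs.
  pose proof (picard_lipschitz k i t s Hi).
  lra.
Qed.

Lemma picard_limit_continuous i :
  (i < n)%nat -> forall s, continuous (fun s => G (picard_limit s) i) s.
Proof.
  intros Hi. apply field_along_continuous with B; auto.
  intros; apply picard_limit_lipschitz; auto.
Qed.

Lemma picard_limit_fixed_point t i :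
  (i < n)%nat ->
  picard_limit t i = u0 i + RInt (fun s => G (picard_limit s) i) t0 (clamp t0 (t0 + h) t).
Proof.
  intros Hi.
  set (V := u0 i + RInt (fun s => G (picard_limit s) i) t0 (clamp t0 (t0 + h) t)).
  enough (Hle : Rabs (picard_limit t i - V) <= 0) by (apply Rabs_le_between in Hle; lra).
  apply Rle_0_of_le_geometric with (C := 2 * B * h); [nra|]. intros k.
  pose proof (Rabs_sub_triang (picard_limit t i) (picard (S k) t i) V) as Htri.
  pose proof (picard_limit_close (S k) t i Hi) as Hclose.
  assert (Hint : Rabs (picard (S k) t i - V) <= h * (K * (2 * B * h * (1 / 2) ^ k))).
  { change (Rabs (u0 i + RInt (fun s => G (picard k s) i) t0 (clamp t0 (t0 + h) t) - V)
      <= h * (K * (2 * B * h * (1 / 2) ^ k))).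
    unfold V. rewrite Rminus_plus_l_l, RInt_minus_R
      by (apply picard_continuous || apply picard_limit_continuous; auto).
    apply RInt_clamp_bound.
    - intros s. apply (continuous_minus (fun s => G (picard k s) i));
        [apply picard_continuous | apply picard_limit_continuous]; auto.
    - intros s. apply G_lipschitz; auto. intros j Hj.
      rewrite Rabs_minus_sym. apply picard_limit_close, Hj. }
  assert (0 <= B * h * (1 / 2) ^ k) by (apply Rmult_le_pos; [nra | apply pow_le; lra]).
  assert (h * (K * (2 * B * h * (1 / 2) ^ k)) <= 1 / 2 * (2 * B * h * (1 / 2) ^ k))
    by (rewrite <- Rmult_assoc; apply Rmult_le_compat_r; lra).
  rewrite <- tech_pow_Rmult in Hclose. lra.
Qed.

Lemma picard_limit_initial i : (i < n)%nat -> picard_limit t0 i = u0 i.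
Proof.
  intros Hi. rewrite picard_limit_fixed_point, clamp_id, RInt_point by (auto; lra).
  apply Rplus_0_r.
Qed.

Lemma picard_limit_near_initial t i :
  (i < n)%nat -> Rabs (picard_limit t i - u0 i) <= 2 * B * h.
Proof. intros Hi. pose proof (picard_limit_close 0 t i Hi). simpl in *. lra. Qed.

Lemma picard_limit_solves : solves n G t0 (t0 + h) picard_limit.
Proof.
  intros t Ht i Hi. apply is_derive_Reals.
  set (g := fun s => G (picard_limit s) i).
  apply (is_derive_ext_loc (fun s => u0 i + RInt g t0 s)).
  - assert (He : 0 < Rmin (t - t0) (t0 + h - t)) by (apply Rmin_pos; lra).
    exists (mkposreal _ He). intros y Hy. change (Rabs (y - t) < Rmin (t - t0) (t0 + h - t)) in Hy.
    pose proof (Rmin_l (t - t0) (t0 + h - t)). pose proof (Rmin_r (t - t0) (t0 + h - t)).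
    apply Rabs_def2 in Hy.
    rewrite (picard_limit_fixed_point y i Hi), clamp_id by lra. reflexivity.
  - assert (Hint : is_derive (fun s => RInt g t0 s) t (g t)).
    { apply (is_derive_RInt g _ t0); [|apply picard_limit_continuous, Hi].
      apply filter_forall. intros u.
      apply (RInt_correct g t0 u), (ex_RInt_continuous (V := R_CompleteNormedModule)).
      intros; apply picard_limit_continuous, Hi. }
    pose proof (is_derive_plus _ _ t _ _ (is_derive_const (u0 i) t) Hint) as Hsum.
    rewrite plus_zero_l in Hsum. exact Hsum.
Qed.

Lemma picard_limit_unique (o : R -> nat -> R) T Sm D :
  T < t0 -> Sm <= t0 + h -> solves n G T Sm o ->
  (forall i, (i < n)%nat -> o t0 i = u0 i) ->
  (forall t, t0 <= t < Sm -> forall i, (i < n)%nat -> Rabs (o t i - picard_limit t i) <= D) ->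
  forall t, t0 <= t < Sm -> forall i, (i < n)%nat -> o t i = picard_limit t i.
Proof.
  intros HT HSm Ho Hinit HD t Ht i Hi.
  assert (HD0 : 0 <= D) by exact (Rle_trans _ _ _ (Rabs_pos _) (HD t Ht i Hi)).
  (* Mean value theorem: a bound D / 2^k on [t0, Sm) improves to D / 2^(k+1), as h K <= 1/2. *)
  assert (Hhalf : forall k t, t0 <= t < Sm -> forall i, (i < n)%nat ->
            Rabs (o t i - picard_limit t i) <= D * (1 / 2) ^ k).
  { induction k as [|k IH]; intros s Hs j Hj; [rewrite Rmult_1_r; auto|].
    destruct (MVT_gen (fun r => o r j - picard_limit r j) t0 s
                (fun r => G (o r) j - G (picard_limit r) j)) as [c [Hc Heq]];
      rewrite ?Rmin_left, ?Rmax_right in * by lra.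
    - intros x Hx. apply is_derive_Reals, derivable_pt_lim_minus.
      + apply Ho; [lra | exact Hj].
      + apply picard_limit_solves; [lra | exact Hj].
    - intros x Hx. apply continuity_pt_minus.
      + apply derivable_continuous_pt. exists (G (o x) j). apply Ho; [lra | exact Hj].
      + apply continuity_pt_filterlim, lipschitz_continuous with B.
        intros; apply picard_limit_lipschitz, Hj.
    - rewrite picard_limit_initial, Hinit, Rminus_diag, Rminus_0_r in Heq by exact Hj.
      rewrite Heq, Rabs_mult, (Rabs_pos_eq (s - t0)) by lra.
      assert (Hlip : Rabs (G (o c) j - G (picard_limit c) j) <= K * (D * (1 / 2) ^ k))
        by (apply G_lipschitz; [intros l Hl; apply IH; [lra | exact Hl] | exact Hj]).
      assert (0 <= D * (1 / 2) ^ k) by (apply Rmult_le_pos; [lra | apply pow_le; lra]).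
      pose proof (Rabs_pos (G (o c) j - G (picard_limit c) j)).
      rewrite <- tech_pow_Rmult. nra. }
  enough (Hle : Rabs (o t i - picard_limit t i) <= 0) by (apply Rabs_le_between in Hle; lra).
  apply Rle_0_of_le_geometric with D; [exact HD0|]. intros k. apply Hhalf; auto.
Qed.

End Picard.

Definition glue (m : R) (y1 y2 : R -> nat -> R) (s : R) : nat -> R :=
  if Rlt_dec s m then y1 s else y2 s.

Section Glue.

Variable n : nat.
Variable G : (nat -> R) -> nat -> R.
Hypothesis G_local : forall x y i, (forall j, (j < n)%nat -> x j = y j) -> G x i = G y i.
Variables (y1 y2 : R -> nat -> R) (c m b : R).
Hypothesis m_between : c < m < b.
Hypothesis y1_y2_agree : forall s, c < s < b -> forall i, (i < n)%nat -> y1 s i = y2 s i.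

Lemma glue_left s : s < b -> forall i, (i < n)%nat -> glue m y1 y2 s i = y1 s i.
Proof.
  intros Hs i Hi. unfold glue. destruct Rlt_dec; [reflexivity|].
  symmetry. apply y1_y2_agree; [lra | exact Hi].
Qed.

Lemma glue_right s : c < s -> forall i, (i < n)%nat -> glue m y1 y2 s i = y2 s i.
Proof.
  intros Hs i Hi. unfold glue. destruct Rlt_dec; [|reflexivity].
  apply y1_y2_agree; [lra | exact Hi].
Qed.

Lemma solves_glue a d :
  solves n G a b y1 -> solves n G c d y2 -> solves n G a d (glue m y1 y2).
Proof.
  intros H1 H2 r Hr i Hi. destruct (Rlt_dec r b) as [Hrb|Hrb].
  - rewrite (G_local _ (y1 r)) by (apply glue_left; lra).
    apply derivable_pt_lim_eq_on with (fun s => y1 s i) a b; [| lra | apply H1; [lra | exact Hi]].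
    intros s Hs. symmetry. apply glue_left; [lra | exact Hi].
  - rewrite (G_local _ (y2 r)) by (apply glue_right; lra).
    apply derivable_pt_lim_eq_on with (fun s => y2 s i) c d; [| lra | apply H2; [lra | exact Hi]].
    intros s Hs. symmetry. apply glue_right; [lra | exact Hi].
Qed.

End Glue.

(** * The vector field of the system *)

Lemma rhs_xi_bounded lam M a b c :
  0 <= lam -> Rabs a <= M -> Rabs b <= M -> Rabs c <= M ->
  Rabs (rhs_xi lam a b c) <= 4 * M ^ 2 + lam.
Proof.
  intros Hl Ha Hb Hc. apply Rabs_le_between in Ha, Hb, Hc.
  unfold rhs_xi. apply Rabs_le_between. split; nra.
Qed.

Lemma rhs_L_bounded lam M x l ri rj rk :
  0 <= lam -> Rabs x <= M -> Rabs l <= M -> Rabs ri <= M -> Rabs rj <= M -> Rabs rk <= M ->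
  Rabs (rhs_L lam x l ri rj rk) <= 4 * M ^ 2 + lam.
Proof.
  intros Hl Hx Hl' Hi Hj Hk. apply Rabs_le_between in Hx, Hl', Hi, Hj, Hk.
  unfold rhs_L. apply Rabs_le_between. split; nra.
Qed.

Lemma rhs_R_bounded M ri li lj lk :
  Rabs ri <= M -> Rabs li <= M -> Rabs lj <= M -> Rabs lk <= M ->
  Rabs (rhs_R ri li lj lk) <= 4 * M ^ 2.
Proof.
  intros Hi Hj Hk Hl. apply Rabs_le_between in Hi, Hj, Hk, Hl.
  unfold rhs_R. apply Rabs_le_between. split; nra.
Qed.

Lemma rhs_xi_lipschitz lam M d a b c a' b' c' :
  Rabs a <= M -> Rabs b <= M -> Rabs c <= M ->
  Rabs a' <= M -> Rabs b' <= M -> Rabs c' <= M ->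
  Rabs (a - a') <= d -> Rabs (b - b') <= d -> Rabs (c - c') <= d ->
  Rabs (rhs_xi lam a b c - rhs_xi lam a' b' c') <= 8 * M * d.
Proof.
  intros Ha Hb Hc Ha' Hb' Hc' Hda Hdb Hdc.
  pose proof (sq_sub_between _ _ _ _ Ha Ha' Hda).
  pose proof (sq_sub_between _ _ _ _ Hb Hb' Hdb).
  pose proof (sq_sub_between _ _ _ _ Hc Hc' Hdc).
  assert (0 <= M * d) by (apply Rmult_le_pos; eapply Rle_trans; eauto using Rabs_pos).
  unfold rhs_xi. apply Rabs_le_between. lra.
Qed.

Lemma rhs_L_lipschitz lam M d x l ri rj rk x' l' ri' rj' rk' :
  Rabs x <= M -> Rabs l <= M -> Rabs ri <= M -> Rabs rj <= M -> Rabs rk <= M ->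
  Rabs x' <= M -> Rabs l' <= M -> Rabs ri' <= M -> Rabs rj' <= M -> Rabs rk' <= M ->
  Rabs (x - x') <= d -> Rabs (l - l') <= d -> Rabs (ri - ri') <= d ->
  Rabs (rj - rj') <= d -> Rabs (rk - rk') <= d ->
  Rabs (rhs_L lam x l ri rj rk - rhs_L lam x' l' ri' rj' rk') <= 8 * M * d.
Proof.
  intros Hx Hl Hi Hj Hk Hx' Hl' Hi' Hj' Hk' Hdx Hdl Hdi Hdj Hdk.
  assert (Hjk : Rabs (rj - rk) <= 2 * M)
    by (apply Rabs_le_between; apply Rabs_le_between in Hj, Hk; lra).
  assert (Hjk' : Rabs (rj' - rk') <= 2 * M)
    by (apply Rabs_le_between; apply Rabs_le_between in Hj', Hk'; lra).
  assert (Hdjk : Rabs ((rj - rk) - (rj' - rk')) <= 2 * d)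
    by (apply Rabs_le_between; apply Rabs_le_between in Hdj, Hdk; lra).
  pose proof (mult_sub_between _ _ _ _ _ _ _ _ Hl Hx' Hdx Hdl).
  pose proof (sq_sub_between _ _ _ _ Hi Hi' Hdi).
  pose proof (sq_sub_between _ _ _ _ Hjk Hjk' Hdjk).
  assert (0 <= M * d) by (apply Rmult_le_pos; eapply Rle_trans; eauto using Rabs_pos).
  unfold rhs_L. apply Rabs_le_between. lra.
Qed.

Lemma rhs_R_lipschitz M d ri li lj lk ri' li' lj' lk' :
  Rabs ri <= M -> Rabs li <= M -> Rabs lj <= M -> Rabs lk <= M ->
  Rabs ri' <= M -> Rabs li' <= M -> Rabs lj' <= M -> Rabs lk' <= M ->
  Rabs (ri - ri') <= d -> Rabs (li - li') <= d -> Rabs (lj - lj') <= d -> Rabs (lk - lk') <= d ->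
  Rabs (rhs_R ri li lj lk - rhs_R ri' li' lj' lk') <= 8 * M * d.
Proof.
  intros Hi Hj Hk Hl Hi' Hj' Hk' Hl' Hdi Hdj Hdk Hdl.
  assert (Hs : Rabs (li - lj - lk) <= 3 * M)
    by (apply Rabs_le_between; apply Rabs_le_between in Hj, Hk, Hl; lra).
  assert (Hds : Rabs ((li - lj - lk) - (li' - lj' - lk')) <= 3 * d)
    by (apply Rabs_le_between; apply Rabs_le_between in Hdj, Hdk, Hdl; lra).
  pose proof (mult_sub_between _ _ _ _ _ _ _ _ Hs Hi' Hdi Hds).
  assert (0 <= M * d) by (apply Rmult_le_pos; eapply Rle_trans; eauto using Rabs_pos).
  unfold rhs_R. apply Rabs_le_between. lra.
Qed.

Definition system_field (lam : R) (x : nat -> R) (i : nat) : R :=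
  match i with
  | 0 => rhs_xi lam (x 1%nat) (x 2%nat) (x 3%nat)
  | 1 => rhs_L lam (x 0%nat) (x 1%nat) (x 4%nat) (x 5%nat) (x 6%nat)
  | 2 => rhs_L lam (x 0%nat) (x 2%nat) (x 5%nat) (x 6%nat) (x 4%nat)
  | 3 => rhs_L lam (x 0%nat) (x 3%nat) (x 6%nat) (x 4%nat) (x 5%nat)
  | 4 => rhs_R (x 4%nat) (x 1%nat) (x 2%nat) (x 3%nat)
  | 5 => rhs_R (x 5%nat) (x 2%nat) (x 3%nat) (x 1%nat)
  | 6 => rhs_R (x 6%nat) (x 3%nat) (x 1%nat) (x 2%nat)
  | _ => 0
  end.

Lemma system_field_local lam x y i :
  (forall j, (j < 7)%nat -> x j = y j) -> system_field lam x i = system_field lam y i.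
Proof.
  intros H. do 7 (destruct i as [|i]; [unfold system_field; rewrite ?H by lia; reflexivity|]).
  reflexivity.
Qed.

Lemma system_field_bounded lam M x i :
  0 <= lam -> in_box 7 M x -> (i < 7)%nat -> Rabs (system_field lam x i) <= 4 * M ^ 2 + lam.
Proof.
  intros Hl Hx Hi. unfold system_field.
  assert (Hx' : forall j, (j < 7)%nat -> Rabs (x j) <= M) by exact Hx.
  assert (0 <= M) by exact (Rle_trans _ _ _ (Rabs_pos _) (Hx' 0%nat ltac:(lia))).
  do 7 (destruct i as [|i];
    [first [ apply rhs_xi_bounded | apply rhs_L_bounded
           | apply Rle_trans with (4 * M ^ 2); [apply rhs_R_bounded | lra] ];
     auto; apply Hx'; lia|]).
  lia.
Qed.

Lemma system_field_lipschitz lam M d x y i :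
  in_box 7 M x -> in_box 7 M y -> (forall j, (j < 7)%nat -> Rabs (x j - y j) <= d) ->
  (i < 7)%nat -> Rabs (system_field lam x i - system_field lam y i) <= 8 * M * d.
Proof.
  intros Hx Hy Hd Hi. unfold system_field.
  do 7 (destruct i as [|i];
    [first [ apply rhs_xi_lipschitz | apply rhs_L_lipschitz | apply rhs_R_lipschitz ];
     first [apply Hx | apply Hy | apply Hd]; lia|]).
  lia.
Qed.

Definition clamp_state (M : R) (x : nat -> R) (i : nat) : R := clamp (- M) M (x i).

Definition clamped_field (lam M : R) (x : nat -> R) : nat -> R :=
  system_field lam (clamp_state M x).

Lemma clamp_state_in_box n M x : 0 <= M -> in_box n M (clamp_state M x).
Proof.
  intros HM i _. apply Rabs_le_between. apply clamp_range. lra.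
Qed.

Lemma clamped_field_on_box lam M x i :
  in_box 7 M x -> clamped_field lam M x i = system_field lam x i.
Proof.
  intros Hx. apply system_field_local. intros j Hj.
  apply clamp_id, Rabs_le_between, Hx, Hj.
Qed.

Lemma clamped_field_bounded lam M x i :
  0 <= lam -> 0 <= M -> (i < 7)%nat -> Rabs (clamped_field lam M x i) <= 4 * M ^ 2 + lam.
Proof. intros. apply system_field_bounded; [| apply clamp_state_in_box |]; auto. Qed.

Lemma clamped_field_lipschitz lam M x y d i :
  0 <= M -> (forall j, (j < 7)%nat -> Rabs (x j - y j) <= d) -> (i < 7)%nat ->
  Rabs (clamped_field lam M x i - clamped_field lam M y i) <= 8 * M * d.
Proof.
  intros HM Hd Hi. apply system_field_lipschitz; try apply clamp_state_in_box; auto.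
  intros j Hj. eapply Rle_trans; [apply clamp_lipschitz; lra | apply Hd, Hj].
Qed.

Lemma solves_clamped_field_iff lam M a b y :
  (forall r, a < r < b -> in_box 7 M (y r)) ->
  solves 7 (clamped_field lam M) a b y <-> solves 7 (system_field lam) a b y.
Proof.
  intros Hy. split; intros H r Hr i Hi.
  - rewrite <- clamped_field_on_box with (M := M); auto.
  - rewrite clamped_field_on_box; auto.
Qed.

(** * Continuation of bounded solutions *)

Definition continuation_step (lam M : R) : R := / (2 * (8 * M + (4 * M ^ 2 + lam) + 1)).

Lemma continuation_step_spec lam M :
  0 <= lam -> 0 <= M ->
  0 < continuation_step lam M /\ continuation_step lam M * (8 * M) <= 1 / 2 /\
  2 * (4 * M ^ 2 + lam) * continuation_step lam M <= 1.
Proof.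
  intros Hl HM. unfold continuation_step.
  assert (0 <= 4 * M ^ 2 + lam) by nra.
  split; [apply Rinv_0_lt_compat; lra|].
  split; apply Rmult_le_reg_r with (2 * (8 * M + (4 * M ^ 2 + lam) + 1)); try lra;
    field_simplify; lra.
Qed.

Lemma system_solution_continues lam M T S tb (o : R -> nat -> R) :
  0 <= lam -> 0 <= M -> T <= tb < S -> solves 7 (system_field lam) T S o ->
  (forall r, tb <= r < S -> in_box 7 M (o r)) ->
  exists (c d : R) (U : R -> nat -> R),
    tb < c < S /\ S < d /\ solves 7 (system_field lam) c d U /\
    forall s, c <= s < S -> forall i, (i < 7)%nat -> o s i = U s i.
Proof.
  intros Hl HM Htb Ho Hbox.
  set (M' := M + 1). set (B := 4 * M' ^ 2 + lam). set (K := 8 * M').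
  assert (HB : 0 <= B) by (unfold B; nra).
  set (h := continuation_step lam M').
  destruct (continuation_step_spec lam M' Hl ltac:(unfold M'; lra)) as (Hh & HhK & HhB).
  fold h B K in Hh, HhK, HhB.
  set (t1 := Rmax ((tb + S) / 2) (S - h / 2)).
  assert (Ht1 : tb < t1 < S /\ S <= t1 + h / 2).
  { pose proof (Rmax_l ((tb + S) / 2) (S - h / 2)). pose proof (Rmax_r ((tb + S) / 2) (S - h / 2)).
    unfold t1, Rmax in *. destruct Rle_dec; lra. }
  set (G := clamped_field lam M').
  assert (HGb : forall x i, (i < 7)%nat -> Rabs (G x i) <= B)
    by (intros; apply clamped_field_bounded; unfold M'; auto; lra).
  assert (HGl : forall x y d i, (forall j, (j < 7)%nat -> Rabs (x j - y j) <= d) -> (i < 7)%nat ->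
            Rabs (G x i - G y i) <= K * d)
    by (intros; apply clamped_field_lipschitz; unfold M'; auto; lra).
  set (U := picard_limit G (o t1) t1 h).
  assert (HUbox : forall s, in_box 7 M' (U s)).
  { intros s i Hi.
    pose proof (picard_limit_near_initial 7 G B K HB HGb HGl (o t1) t1 h ltac:(lra) HhK s i Hi)
      as HU.
    pose proof (Hbox t1 ltac:(lra) i Hi) as Ho1.
    apply Rabs_le_between in HU, Ho1. apply Rabs_le_between. unfold M'. fold U in HU. lra. }
  exists t1, (t1 + h), U. split; [lra|]. split; [lra|]. split.
  - apply (solves_clamped_field_iff lam M'); [intros; apply HUbox|].
    exact (picard_limit_solves 7 G B K HB HGb HGl (o t1) t1 h ltac:(lra) HhK).
  - apply (picard_limit_unique 7 G B K HB HGb HGl (o t1) t1 h ltac:(lra) HhK o tb S (2 * M'));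
      [lra | lra | | reflexivity |].
    + apply (solves_clamped_field_iff lam M').
      * intros r Hr. apply in_box_le with M; [unfold M'; lra | apply Hbox; lra].
      * apply solves_restrict with T S; auto; lra.
    + intros s Hs i Hi.
      pose proof (Hbox s ltac:(lra) i Hi) as Hos. pose proof (HUbox s i Hi) as HUs.
      apply Rabs_le_between in Hos, HUs. apply Rabs_le_between. unfold M' in *. fold U. lra.
Qed.

Definition trajectory (xi L1 L2 L3 R1 R2 R3 : R -> R) (s : R) (i : nat) : R :=
  match i with
  | 0 => xi s | 1 => L1 s | 2 => L2 s | 3 => L3 s | 4 => R1 s | 5 => R2 s | 6 => R3 s
  | _ => 0
  end.

Lemma trajectory_solves lam T S xi L1 L2 L3 R1 R2 R3 :
  is_solution_on lam T S xi L1 L2 L3 R1 R2 R3 ->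
  let o := trajectory xi L1 L2 L3 R1 R2 R3 in
  solves 7 (system_field lam) T S o /\
  forall i, (i < 7)%nat -> filterlim (fun s => o s i) (at_right T) (locally (o T i)).
Proof.
  intros [Hd Hc] o. split.
  - intros r Hr i Hi. destruct (Hd r Hr) as (D0 & D1 & D2 & D3 & D4 & D5 & D6).
    do 7 (destruct i as [|i]; [assumption|]). lia.
  - intros i Hi. destruct Hc as (C0 & C1 & C2 & C3 & C4 & C5 & C6).
    do 7 (destruct i as [|i]; [assumption|]). lia.
Qed.

Lemma is_solution_on_of_solves lam T S (W : R -> nat -> R) :
  solves 7 (system_field lam) T S W ->
  (forall i, (i < 7)%nat -> filterlim (fun s => W s i) (at_right T) (locally (W T i))) ->
  is_solution_on lam T S (fun s => W s 0%nat) (fun s => W s 1%nat) (fun s => W s 2%nat)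
    (fun s => W s 3%nat) (fun s => W s 4%nat) (fun s => W s 5%nat) (fun s => W s 6%nat).
Proof.
  intros Hd Hc. split; [intros r Hr; repeat split | repeat split];
    first [apply Hd; [exact Hr | lia] | apply Hc; lia].
Qed.

Lemma bounded_solution_extends lam T S xi L1 L2 L3 R1 R2 R3 tb M :
  0 <= lam -> 0 <= M -> T <= tb < S ->
  is_solution_on lam T S xi L1 L2 L3 R1 R2 R3 ->
  (forall r, tb <= r < S -> in_box 7 M (trajectory xi L1 L2 L3 R1 R2 R3 r)) ->
  ~ not_extendable lam T S xi L1 L2 L3 R1 R2 R3.
Proof.
  intros Hl HM Htb Hsol Hbox Hne.
  set (o := trajectory xi L1 L2 L3 R1 R2 R3).
  destruct (trajectory_solves lam T S xi L1 L2 L3 R1 R2 R3 Hsol) as [Ho Hrc].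
  destruct (system_solution_continues lam M T S tb o Hl HM Htb Ho Hbox)
    as (c & d & U & Hc & Hd & HU & HoU).
  assert (Hm : c < (c + S) / 2 < S) by lra.
  assert (Hagree : forall s, c < s < S -> forall i, (i < 7)%nat -> o s i = U s i)
    by (intros s Hs; apply HoU; lra).
  set (W := glue ((c + S) / 2) o U).
  assert (HWo : forall s, s < S -> forall i, (i < 7)%nat -> W s i = o s i)
    by exact (glue_left 7 o U c _ S Hm Hagree).
  apply Hne. exists d, (fun s => W s 0%nat), (fun s => W s 1%nat), (fun s => W s 2%nat),
    (fun s => W s 3%nat), (fun s => W s 4%nat), (fun s => W s 5%nat), (fun s => W s 6%nat).
  split; [lra|]. split.
  - apply is_solution_on_of_solves.
    + apply (solves_glue 7 (system_field lam) (system_field_local lam) o U c _ S Hm Hagree);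
        assumption.
    + intros i Hi. apply filterlim_at_right_eq with (fun s => o s i) S; [lra | | apply Hrc, Hi].
      intros s Hs. symmetry. apply HWo; [lra | exact Hi].
  - intros r Hr. repeat split; rewrite HWo by (lra || lia); reflexivity.
Qed.

(** * A priori bounds *)

Lemma weighted_energy_nonincreasing (f g df dg : R -> R) Q a b :
  (forall r, a < r < b ->
     derivable_pt_lim f r (df r) /\ derivable_pt_lim g r (dg r) /\
     2 * f r * df r + (f r ^ 2 + Q) * dg r <= 0) ->
  forall x y, a < x -> x <= y -> y < b -> (f y ^ 2 + Q) * exp (g y) <= (f x ^ 2 + Q) * exp (g x).
Proof.
  intros H.
  apply nonincreasing_of_derive_nonpos
    with (df := fun r => (2 * f r * df r + (f r ^ 2 + Q) * dg r) * exp (g r)).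
  intros r Hr. destruct (H r Hr) as (Hf & Hg & Hsign). split.
  - apply is_derive_Reals in Hf, Hg. apply is_derive_Reals.
    auto_derive.
    + split; [exists (df r); exact Hf | split; [exists (dg r); exact Hg | exact I]].
    + assert (Ef : Derive (fun x : R => f x) r = df r) by (apply is_derive_unique, Hf).
      assert (Eg : Derive (fun x : R => g x) r = dg r) by (apply is_derive_unique, Hg).
      rewrite Ef, Eg. ring.
  - pose proof (exp_pos (g r)). nra.
Qed.

Lemma sq_le_of_weighted_energy v Q g c E :
  0 <= Q -> (v ^ 2 + Q) * exp g <= c -> exp (- g) <= E -> v ^ 2 <= c * E.
Proof.
  intros HQ Hc HE.
  assert (Hinv : exp g * exp (- g) = 1) by (rewrite <- exp_plus, Rplus_opp_r; apply exp_0).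
  pose proof (exp_pos g). pose proof (exp_pos (- g)). pose proof (pow2_ge_0 v).
  apply Rle_trans with ((v ^ 2 + Q) * exp g * exp (- g)); [rewrite Rmult_assoc, Hinv; lra|].
  apply Rle_trans with (c * exp (- g)); [apply Rmult_le_compat_r; lra|].
  apply Rmult_le_compat_l; nra.
Qed.

(* The weight exp (xi r - 3 r) absorbs the growth rate L_i - L_j - L_k of R_i,
   because xi' <= - L_1^2 - L_2^2 - L_3^2. *)
Lemma R_sq_bounded (Ri Li Lj Lk xi dxi : R -> R) T S A t0 :
  (forall r, T < r < S ->
     derivable_pt_lim Ri r (rhs_R (Ri r) (Li r) (Lj r) (Lk r)) /\
     derivable_pt_lim xi r (dxi r) /\ dxi r <= - Li r ^ 2 - Lj r ^ 2 - Lk r ^ 2) ->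
  (forall r, T < r < S -> A <= xi r) -> T < t0 ->
  forall r, t0 <= r < S ->
    Ri r ^ 2 <= Ri t0 ^ 2 * exp (xi t0 - 3 * t0) * exp (3 * S - A).
Proof.
  intros Hd HA Ht0 r Hr. rewrite <- (Rplus_0_r (Ri t0 ^ 2)).
  apply (sq_le_of_weighted_energy _ 0 (xi r - 3 * r)); [lra | |].
  - apply (weighted_energy_nonincreasing Ri (fun t => xi t - 3 * t)
             (fun t => rhs_R (Ri t) (Li t) (Lj t) (Lk t)) (fun t => dxi t - 3) 0 T S); try lra.
    intros s Hs. destruct (Hd s Hs) as (HR & Hx & Hdx). split; [exact HR|]. split.
    + apply (derivable_pt_lim_minus xi (fun t => 3 * t)); [exact Hx|].
      apply derivable_pt_lim_linear.
    + unfold rhs_R.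
      assert (2 * (Li s - Lj s - Lk s) + (dxi s - 3) <= 0)
        by (pose proof (pow2_ge_0 (Li s - 1)); pose proof (pow2_ge_0 (Lj s + 1));
            pose proof (pow2_ge_0 (Lk s + 1)); nra).
      pose proof (pow2_ge_0 (Ri s)). nra.
  - apply exp_le_exp. pose proof (HA r ltac:(lra)). lra.
Qed.

Lemma L_sq_bounded (Li Ri Rj Rk xi : R -> R) lam a b X P t1 :
  0 <= lam -> 0 <= X ->
  (forall r, a < r < b ->
     derivable_pt_lim Li r (rhs_L lam (xi r) (Li r) (Ri r) (Rj r) (Rk r)) /\
     Rabs (xi r) <= X /\ Ri r ^ 2 <= P /\ Rj r ^ 2 <= P /\ Rk r ^ 2 <= P) ->
  a < t1 ->
  forall r, t1 <= r < b ->
    Li r ^ 2 <= (Li t1 ^ 2 + (3 * P + lam) ^ 2) * exp (- (2 * X + 1) * t1)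
                 * exp ((2 * X + 1) * b).
Proof.
  intros Hl HX Hd Ht1 r Hr. set (Q := (3 * P + lam) ^ 2).
  apply (sq_le_of_weighted_energy _ Q (- (2 * X + 1) * r)); [apply pow2_ge_0 | |].
  - apply (weighted_energy_nonincreasing Li (fun t => - (2 * X + 1) * t)
             (fun t => rhs_L lam (xi t) (Li t) (Ri t) (Rj t) (Rk t)) (fun _ => - (2 * X + 1))
             Q a b); try lra.
    intros s Hs. destruct (Hd s Hs) as (HL & Hx & Hi & Hj & Hk).
    split; [exact HL | split; [apply derivable_pt_lim_linear|]].
    set (beta := Ri s ^ 2 / 2 - (Rj s - Rk s) ^ 2 / 2 - lam).
    (* 2 L beta <= L^2 + beta^2 <= L^2 + Q and - 2 xi L^2 <= 2 X L^2; the weight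
       exp (- (2 X + 1) r) absorbs both. *)
    assert (Hbeta : beta ^ 2 <= Q).
    { assert (0 <= (Rj s + Rk s) ^ 2) by apply pow2_ge_0.
      assert (- (3 * P + lam) <= beta <= 3 * P + lam)
        by (pose proof (pow2_ge_0 (Ri s)); pose proof (pow2_ge_0 (Rj s - Rk s));
            unfold beta; split; nra).
      unfold Q. nra. }
    replace (rhs_L lam (xi s) (Li s) (Ri s) (Rj s) (Rk s)) with (- xi s * Li s + beta)
      by (unfold rhs_L, beta; ring).
    apply Rabs_le_between in Hx.
    pose proof (pow2_ge_0 (Li s)). pose proof (pow2_ge_0 (Li s - beta)).
    assert (0 <= X * Q) by (apply Rmult_le_pos; [lra | apply pow2_ge_0]).
    assert (- xi s * Li s ^ 2 <= X * Li s ^ 2) by nra.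
    nra.
  - apply exp_le_exp. nra.
Qed.

Lemma xi_nonincreasing lam T S xi L1 L2 L3 R1 R2 R3 :
  0 <= lam -> is_solution_on lam T S xi L1 L2 L3 R1 R2 R3 ->
  forall x y, T < x -> x <= y -> y < S -> xi y <= xi x.
Proof.
  intros Hl [Hd _].
  apply nonincreasing_of_derive_nonpos with (df := fun r => rhs_xi lam (L1 r) (L2 r) (L3 r)).
  intros r Hr. split; [apply Hd, Hr|]. unfold rhs_xi.
  pose proof (pow2_ge_0 (L1 r)). pose proof (pow2_ge_0 (L2 r)). pose proof (pow2_ge_0 (L3 r)).
  lra.
Qed.

Lemma R_components_bounded lam T S xi L1 L2 L3 R1 R2 R3 A t0 :
  0 <= lam -> is_solution_on lam T S xi L1 L2 L3 R1 R2 R3 ->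
  (forall r, T < r < S -> A <= xi r) -> T < t0 ->
  exists P, forall r, t0 <= r < S -> R1 r ^ 2 <= P /\ R2 r ^ 2 <= P /\ R3 r ^ 2 <= P.
Proof.
  intros Hl [Hd _] HA Ht0.
  set (dxi := fun r => rhs_xi lam (L1 r) (L2 r) (L3 r)).
  set (bound := fun Ri : R -> R => Ri t0 ^ 2 * exp (xi t0 - 3 * t0) * exp (3 * S - A)).
  exists (Rmax (bound R1) (Rmax (bound R2) (bound R3))). intros r Hr.
  assert (B1 : R1 r ^ 2 <= bound R1).
  { apply (R_sq_bounded R1 L1 L2 L3 xi dxi T S A t0); auto. intros s Hs.
    destruct (Hd s Hs) as (D0 & _ & _ & _ & D4 & _ & _).
    unfold dxi, rhs_xi. repeat split; auto. lra. }
  assert (B2 : R2 r ^ 2 <= bound R2).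
  { apply (R_sq_bounded R2 L2 L3 L1 xi dxi T S A t0); auto. intros s Hs.
    destruct (Hd s Hs) as (D0 & _ & _ & _ & _ & D5 & _).
    unfold dxi, rhs_xi. repeat split; auto. lra. }
  assert (B3 : R3 r ^ 2 <= bound R3).
  { apply (R_sq_bounded R3 L3 L1 L2 xi dxi T S A t0); auto. intros s Hs.
    destruct (Hd s Hs) as (D0 & _ & _ & _ & _ & _ & D6).
    unfold dxi, rhs_xi. repeat split; auto. lra. }
  pose proof (Rmax_l (bound R1) (Rmax (bound R2) (bound R3))).
  pose proof (Rmax_r (bound R1) (Rmax (bound R2) (bound R3))).
  pose proof (Rmax_l (bound R2) (bound R3)). pose proof (Rmax_r (bound R2) (bound R3)).
  lra.
Qed.

Lemma L_components_bounded lam T S xi L1 L2 L3 R1 R2 R3 X P t0 t1 :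
  0 <= lam -> 0 <= X -> is_solution_on lam T S xi L1 L2 L3 R1 R2 R3 ->
  (forall r, t0 <= r < S ->
     Rabs (xi r) <= X /\ R1 r ^ 2 <= P /\ R2 r ^ 2 <= P /\ R3 r ^ 2 <= P) ->
  T <= t0 < t1 ->
  exists C, forall r, t1 <= r < S -> L1 r ^ 2 <= C /\ L2 r ^ 2 <= C /\ L3 r ^ 2 <= C.
Proof.
  intros Hl HX [Hd _] Hbnd Ht.
  set (bound := fun Li : R -> R =>
    (Li t1 ^ 2 + (3 * P + lam) ^ 2) * exp (- (2 * X + 1) * t1) * exp ((2 * X + 1) * S)).
  exists (Rmax (bound L1) (Rmax (bound L2) (bound L3))). intros r Hr.
  assert (B1 : L1 r ^ 2 <= bound L1).
  { apply (L_sq_bounded L1 R1 R2 R3 xi lam t0 S X P t1); auto; [|lra]. intros s Hs.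
    destruct (Hd s ltac:(lra)) as (_ & D1 & _ & _ & _ & _ & _).
    destruct (Hbnd s ltac:(lra)) as (? & ? & ? & ?). auto. }
  assert (B2 : L2 r ^ 2 <= bound L2).
  { apply (L_sq_bounded L2 R2 R3 R1 xi lam t0 S X P t1); auto; [|lra]. intros s Hs.
    destruct (Hd s ltac:(lra)) as (_ & _ & D2 & _ & _ & _ & _).
    destruct (Hbnd s ltac:(lra)) as (? & ? & ? & ?). auto. }
  assert (B3 : L3 r ^ 2 <= bound L3).
  { apply (L_sq_bounded L3 R3 R1 R2 xi lam t0 S X P t1); auto; [|lra]. intros s Hs.
    destruct (Hd s ltac:(lra)) as (_ & _ & _ & D3 & _ & _ & _).
    destruct (Hbnd s ltac:(lra)) as (? & ? & ? & ?). auto. }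
  pose proof (Rmax_l (bound L1) (Rmax (bound L2) (bound L3))).
  pose proof (Rmax_r (bound L1) (Rmax (bound L2) (bound L3))).
  pose proof (Rmax_l (bound L2) (bound L3)). pose proof (Rmax_r (bound L2) (bound L3)).
  lra.
Qed.

Lemma solution_bounded_near_end lam T S xi L1 L2 L3 R1 R2 R3 A :
  0 <= lam -> T < S -> is_solution_on lam T S xi L1 L2 L3 R1 R2 R3 ->
  (forall r, T < r < S -> A <= xi r) ->
  exists tb M, T <= tb < S /\ 0 <= M /\
    forall r, tb <= r < S -> in_box 7 M (trajectory xi L1 L2 L3 R1 R2 R3 r).
Proof.
  intros Hl HTS Hsol HA.
  set (t0 := (T + S) / 2). set (X := Rabs A + Rabs (xi t0)).
  pose proof (Rabs_pos A). pose proof (Rabs_pos (xi t0)).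
  assert (HX : 0 <= X) by (unfold X; lra).
  assert (Hxi : forall r, t0 <= r < S -> Rabs (xi r) <= X).
  { intros r Hr. pose proof (HA r ltac:(unfold t0 in *; lra)).
    pose proof (xi_nonincreasing lam T S xi L1 L2 L3 R1 R2 R3 Hl Hsol t0 r
                  ltac:(unfold t0; lra) ltac:(lra) ltac:(lra)).
    pose proof (Rle_abs (xi t0)). pose proof (Rabs_Ropp A). pose proof (Rle_abs (- A)).
    apply Rabs_le_between. unfold X. lra. }
  destruct (R_components_bounded lam T S xi L1 L2 L3 R1 R2 R3 A t0 Hl Hsol HA
              ltac:(unfold t0; lra)) as [P HP].
  set (t1 := (t0 + S) / 2).
  destruct (L_components_bounded lam T S xi L1 L2 L3 R1 R2 R3 X P t0 t1 Hl HX Hsol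
              ltac:(intros r Hr; split; [apply Hxi | apply HP]; exact Hr)
              ltac:(unfold t1, t0; lra)) as [C HC].
  set (M := Rmax X (Rmax (1 + P) (1 + C))).
  exists t1, M. split; [unfold t1, t0; lra|].
  split; [apply Rle_trans with X; [exact HX | apply Rmax_l]|].
  intros r Hr i Hi.
  assert (Hr0 : t0 <= r < S) by (unfold t1 in Hr; lra).
  pose proof (Hxi r Hr0) as Bxi.
  destruct (HP r Hr0) as (B4 & B5 & B6). destruct (HC r Hr) as (B1 & B2 & B3).
  apply Rabs_le_of_sq_le in B1, B2, B3, B4, B5, B6.
  pose proof (Rmax_l X (Rmax (1 + P) (1 + C))). pose proof (Rmax_r X (Rmax (1 + P) (1 + C))).
  pose proof (Rmax_l (1 + P) (1 + C)). pose proof (Rmax_r (1 + P) (1 + C)).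
  do 7 (destruct i as [|i]; [cbn [trajectory]; unfold M in *; lra|]). lia.
Qed.

Lemma nonincreasing_unbounded_below_at_left (f : R -> R) T S :
  (forall x y, T < x -> x <= y -> y < S -> f y <= f x) ->
  ~ (exists A, forall r, T < r < S -> A <= f r) ->
  filterlim f (at_left S) (Rbar_locally m_infty).
Proof.
  intros Hmono Hunb P [A HP].
  destruct (classic (exists r, T < r < S /\ f r < A)) as [[r [Hr Hfr]] | Hn].
  - assert (He : 0 < S - r) by lra.
    exists (mkposreal _ He). intros y Hy HyS. change (Rabs (y - S) < S - r) in Hy.
    apply Rabs_def2 in Hy. apply HP. pose proof (Hmono r y ltac:(lra) ltac:(lra) HyS). lra.
  - exfalso. apply Hunb. exists A. intros r Hr.
    apply Rnot_lt_le. intros Hlt. apply Hn. exists r. auto.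
Qed.

Theorem proposition3p3 (lam T S : R) (xi L1 L2 L3 R1 R2 R3 : R -> R) :
  0 <= lam -> T < S ->
  is_solution_on lam T S xi L1 L2 L3 R1 R2 R3 ->
  not_extendable lam T S xi L1 L2 L3 R1 R2 R3 ->
  filterlim xi (at_left S) (Rbar_locally m_infty).
Proof.
  intros Hl HTS Hsol Hne.
  destruct (classic (exists A, forall r, T < r < S -> A <= xi r)) as [[A HA] | Hunb].
  - destruct (solution_bounded_near_end lam T S xi L1 L2 L3 R1 R2 R3 A Hl HTS Hsol HA)
      as (tb & M & Htb & HM & Hbox).
    exfalso.
    exact (bounded_solution_extends lam T S xi L1 L2 L3 R1 R2 R3 tb M Hl HM Htb Hsol Hbox Hne).
  - apply (nonincreasing_unbounded_below_at_left xi T S); [|exact Hunb].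
    exact (xi_nonincreasing lam T S xi L1 L2 L3 R1 R2 R3 Hl Hsol).
Qed.
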